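(* Let $(E,\tau)$ be a uniquely generated violator space. Then the partition $\mathcal{P}$ of $2^E$ into the equivalence classes of the relation $X\sim Y\iff\tau(X)=\tau(Y)$ is a hypercube partition of $2^E$, i.e., every equivalence class is an interval $[A,B]=\{C\subseteq E: A\subseteq C\subseteq B\}$ for some $A\subseteq B\subseteq E$.
   Context: $E$ is a finite set and $\tau:2^E\to 2^E$. $(E,\tau)$ is a violator space if (C1) $Y\subseteq\tau(Y)$ for all $Y\subseteq E$, and (C22) for all $F,G\subseteq E$, $F\subseteq G\subseteq\tau(F)$ implies $\tau(G)=\tau(F)$. For $X\subseteq E$, a generator of $X$ is any $B\subseteq E$ with $\tau(B)=\tau(X)$; a basis of $X$ is an inclusion-minimal generator of $X$. The space is uniquely generated if every $X\subseteq E$ has exactly one basis. A hypercube partition of $2^E$ is a partition of $2^E$ into disjoint intervals $[A,B]$. *)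

From mathcomp Require Import all_boot.
Set Implicit Arguments. Unset Strict Implicit. Unset Printing Implicit Defensive.

Definition violator_space (E : finType) (tau : {set E} -> {set E}) : Prop :=
  (forall Y : {set E}, Y \subset tau Y) /\
  (forall F G : {set E}, F \subset G -> G \subset tau F -> tau G = tau F).

Definition generator (E : finType) (tau : {set E} -> {set E}) (X B : {set E}) : Prop :=
  tau B = tau X.

Definition basis (E : finType) (tau : {set E} -> {set E}) (X B : {set E}) : Prop :=
  generator tau X B /\
  (forall B' : {set E}, B' \subset B -> generator tau X B' -> B' = B).

Definition uniquely_generated (E : finType) (tau : {set E} -> {set E}) : Prop :=
  forall X : {set E}, exists B : {set E},
    basis tau X B /\ forall B', basis tau X B' -> B' = B.

Definition interval (E : finType) (A B : {set E}) : {set {set E}} :=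
  [set C : {set E} | (A \subset C) && (C \subset B)].

Definition tau_class (E : finType) (tau : {set E} -> {set E}) (X : {set E})
  : {set {set E}} := [set Y : {set E} | tau Y == tau X].

Definition classes_are_intervals (E : finType) (tau : {set E} -> {set E}) : Prop :=
  forall X : {set E}, exists A B : {set E},
    A \subset B /\ tau_class tau X = interval A B.

From mathcomp Require Import all_boot.

(* The class of X is the interval [A, tau X], where A is the unique basis of X.
   Every member Y of the class lies below tau Y = tau X, and contains a minimal
   generator of X inside itself, which by uniqueness is A; conversely any Y with
   A <= Y <= tau X = tau A has tau Y = tau A by axiom (C22). *)

Section ViolatorSpace.

Variables (E : finType) (tau : {set E} -> {set E}).

Lemma basis_subset_generator {X Y : {set E}} :
  generator tau X Y -> exists2 B, basis tau X B & B \subset Y.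
Proof.
move=> genY.
have PY : [pred Z : {set E} | (tau Z == tau X) && (Z \subset Y)] Y.
  by rewrite /= genY eqxx subxx.
have [B minB] := minset_exists PY.
have /andP [/eqP genB BY] := minsetp minB.
exists B => //; split=> // B' B'B genB'.
by apply: (minsetinf minB); rewrite //= genB' eqxx (subset_trans B'B BY).
Qed.

Hypothesis tauV : violator_space tau.

Lemma tau_extensive (Y : {set E}) : Y \subset tau Y.
Proof. by case: tauV. Qed.

Lemma tau_eq_between (A Y : {set E}) :
  A \subset Y -> Y \subset tau A -> tau Y = tau A.
Proof. by case: tauV => _; apply. Qed.

Lemma tau_class_interval_basis (X A : {set E}) :
  basis tau X A -> (forall B, basis tau X B -> B = A) ->
  tau_class tau X = interval A (tau X).
Proof.
move=> [genA _] uniqA; apply/setP => Y; rewrite !inE.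
apply/eqP/andP => [genY | [AY YtauX]].
- have [B /uniqA-> BY] := basis_subset_generator genY.
  by rewrite BY -genY tau_extensive.
- by rewrite -genA in YtauX *; apply: tau_eq_between.
Qed.

End ViolatorSpace.

Theorem mainTheorem16 (E : finType) (tau : {set E} -> {set E}) :
  violator_space tau -> uniquely_generated tau -> classes_are_intervals tau.
Proof.
move=> tauV uniq_gen X.
have [A [basisA uniqA]] := uniq_gen X.
exists A, (tau X); split; last exact: tau_class_interval_basis.
by case: basisA => <- _; apply: tau_extensive.
Qed.
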